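(* For every prime $p\ge7$, $N_{=}(4p)\ge p^2+11p-1$.
   Context: Graphs are finite, undirected and simple; the order of a graph is its number of vertices. For a positive integer $k$, $N_{=}(k)$ denotes the smallest integer $n\ge1$ such that every graph on $n$ vertices contains an induced regular subgraph (all vertices of the subgraph having the same degree within it) of order exactly $k$. *)

From mathcomp Require Import all_boot.
Set Implicit Arguments. Unset Strict Implicit. Unset Printing Implicit Defensive.

Definition simple_graph (n : nat) (e : rel 'I_n) : Prop :=
  (forall x, ~~ e x x) /\ (forall x y, e x y = e y x).

Definition induced_regular (n : nat) (e : rel 'I_n) (S : {set 'I_n}) : Prop :=
  exists d : nat, forall v, v \in S -> #|[set u in S | e v u]| = d.

Definition forces_reg (k n : nat) : Prop :=
  forall e : rel 'I_n, simple_graph e ->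
    exists S : {set 'I_n}, #|S| = k /\ induced_regular e S.

(* N_=(k) >= m : every n >= 1 with the forcing property is at least m
   (equivalently, the smallest such n is at least m). *)
Definition N_eq_ge (k m : nat) : Prop :=
  forall n : nat, 1 <= n -> forces_reg k n -> m <= n.

From mathcomp Require Import all_boot zify.
Set Implicit Arguments. Unset Strict Implicit. Unset Printing Implicit Defensive.

(* Take the disjoint union of [p] triangles, [p - 2] edges, two isolated
   vertices and the complete multipartite graph with three parts of size
   [2p - 1], [p - 4] parts of size [p - 1], [p] of size 3 and [2p] of size 1:
   it has [p^2 + 11p - 1] vertices, and smaller graphs are taken as its induced
   subgraphs.  An induced [d]-regular subgraph meets every clique in 0 or
   [d + 1] vertices, and, if [b] of its vertices lie on the multipartite side,
   every part in 0 or [b - d] vertices.  Without clique vertices this makes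
   [4p] a multiple [(b - d) m] with [m] at most the number of parts of size at
   least [b - d], which the part sizes forbid because [p] is a prime other than
   3.  With clique vertices [d <= 2]; meeting two parts forces [b <= 2d] (the
   traces are disjoint of size [b - d]) and meeting one forces [d = 0]; either
   way the cliques cannot supply the remaining vertices. *)

Lemma card_uniform_classes (T : finType) (f : T -> nat) (X : {set T}) t
    (J : seq nat) :
  uniq J -> {in X, forall x, f x \in J} ->
  {in X, forall x, #|[set y in X | f y == f x]| = t} ->
  exists2 m, m <= size J & #|X| = t * m.
Proof.
elim: J X => [|j J IH] X /=.
  move=> _ inJ _; exists 0 => //; apply/eqP; rewrite muln0 cards_eq0.
  by apply/eqP/setP => x; rewrite inE; apply/negbTE/negP => /inJ.
case/andP=> _ uJ inJ cls.
pose Y := [set x in X | f x != j].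
have [x|x xY|m leJ cardY] := IH Y uJ.
- rewrite inE => /andP[xX fj]; move: (inJ x xX).
  by rewrite inE (negbTE fj).
- move: xY; rewrite inE => /andP[xX fj]; rewrite -(cls x xX).
  apply: eq_card => y; rewrite !inE -andbA; case: (f y =P f x) => [->|].
    by rewrite fj andbT.
  by rewrite !andbF.
have cardX : #|X| = #|X :&: [set x | f x == j]| + #|Y|.
  rewrite -(cardsID [set x | f x == j] X); congr (_ + _).
  by apply: eq_card => y; rewrite !inE andbC.
case: (set_0Vmem (X :&: [set x | f x == j])) => [j0 | [x]].
  by exists m; rewrite ?cardX ?j0 ?cards0 // ltnW.
rewrite !inE => /andP[xX /eqP fx]; exists m.+1 => //.
rewrite cardX cardY -(cls x xX) mulnS; congr (_ + _).
by apply: eq_card => y; rewrite !inE fx andbC.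
Qed.

Lemma size_filter_nth (s : seq nat) (P : pred nat) :
  size [seq j <- iota 0 (size s) | P (nth 0 s j)] = count P s.
Proof.
by rewrite size_filter -(count_map (nth 0 s)) map_nth_iota0 // take_size.
Qed.

Section CliquesMultipartite.

Variables (T : finType) (lab : T -> bool * nat).

(* Vertices labelled [(true, j)] form the [j]-th clique, vertices labelled
   [(false, j)] the [j]-th part of a complete multipartite graph; the two
   sides are not joined. *)
Definition cliques_multipartite : rel T := fun x y =>
  (x != y) && ((lab x).1 == (lab y).1) && ((lab x == lab y) == (lab x).1).

Definition side (S : {set T}) (b : bool) := [set u in S | (lab u).1 == b].

Definition label_class (S : {set T}) (v : T) := [set u in S | lab u == lab v].

Local Notation G := cliques_multipartite.

Lemma cliques_multipartite_sym : symmetric G.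
Proof.
move=> x y; rewrite /G eq_sym [lab x == _]eq_sym [(lab x).1 == _]eq_sym.
by case: ((lab y).1 =P (lab x).1) => [->|]; rewrite ?andbF.
Qed.

Lemma card_sides (S : {set T}) : #|side S true| + #|side S false| = #|S|.
Proof.
rewrite -(cardsID [set u | (lab u).1] S); congr (_ + _); apply: eq_card => u;
  by rewrite !inE ?eqb_id ?eqbF_neg andbC.
Qed.

Lemma label_class_sub_side (S : {set T}) v :
  label_class S v \subset side S (lab v).1.
Proof. by apply/subsetP => u; rewrite !inE => /andP[-> /eqP->] /=. Qed.

Lemma card_label_class_gt0 (S : {set T}) v : v \in S -> 0 < #|label_class S v|.
Proof. by move=> vS; apply/card_gt0P; exists v; rewrite inE vS eqxx. Qed.

Lemma deg_clique (S : {set T}) v : v \in S -> (lab v).1 ->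
  #|[set u in S | G v u]| = #|label_class S v| - 1.
Proof.
move=> vS cv; rewrite (cardsD1 v (label_class S v)) inE vS eqxx add1n subn1 /=.
apply: eq_card => u; rewrite !inE /G cv eq_sym [lab v == _]eq_sym.
case: (lab u =P lab v) => [->|_]; last by rewrite !andbF.
by rewrite cv; case: (u \in S); case: (u != v).
Qed.

Lemma deg_part (S : {set T}) v : v \in S -> ~~ (lab v).1 ->
  #|[set u in S | G v u]| = #|side S false| - #|label_class S v|.
Proof.
move=> vS pv; have sub := label_class_sub_side S v.
rewrite (negbTE pv) in sub; rewrite -(setIidPr sub) -cardsD.
apply: eq_card => u; rewrite !inE /G (negbTE pv) eq_sym [lab v == _]eq_sym.
case: (u =P v) => [->|_]; first by rewrite vS eqxx !andbF.
by case: (u \in S); case: (lab u == lab v); case: (lab u).1.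
Qed.

Section Regular.

Variables (S : {set T}) (d : nat).
Hypothesis regular : {in S, forall v, #|[set u in S | G v u]| = d}.

Lemma card_label_class_clique v :
  v \in side S true -> #|label_class S v| = d.+1.
Proof.
rewrite inE => /andP[vS /eqP cv]; have := card_label_class_gt0 vS.
by have := deg_clique vS; rewrite cv regular // => /(_ isT); lia.
Qed.

Lemma card_label_class_part v :
  v \in side S false -> #|label_class S v| + d = #|side S false|.
Proof.
rewrite inE => /andP[vS /eqP pv]; rewrite -(regular vS) deg_part ?pv //.
by have := subset_leq_card (label_class_sub_side S v); rewrite pv; lia.
Qed.

Lemma card_part_side_le_double : 0 < d -> #|side S false| <= d.*2.
Proof.
move=> d_gt0.
have [->|[w wP]] := set_0Vmem (side S false); first by rewrite cards0.
have cw := card_label_class_part wP.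
have subw : label_class S w \subset side S false.
  by have := label_class_sub_side S w; move: wP; rewrite inE => /andP[_ /eqP->].
have [u uPw] : exists u, u \in side S false :\: label_class S w.
  by apply/card_gt0P; rewrite cardsD (setIidPr subw); lia.
have uP : u \in side S false by move: uPw; rewrite inE => /andP[].
have subu : label_class S u \subset side S false :\: label_class S w.
  apply/subsetP => x; move: uPw; rewrite !inE => /andP[+ /andP[uS pu]].
  by rewrite uS /= => nuw /andP[xS /eqP->]; rewrite xS nuw pu.
have := subset_leq_card subu; rewrite cardsD (setIidPr subw).
by have := card_label_class_part uP; lia.
Qed.

End Regular.

Variable sizes : bool -> seq nat.
Hypothesis card_label_le :
  forall b j, #|[set u | lab u == (b, j)]| <= nth 0 (sizes b) j.

Lemma card_side_uniform (S : {set T}) b t :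
    {in side S b, forall v, #|label_class S v| = t} ->
  exists2 m, m <= count (leq t) (sizes b) & #|side S b| = t * m.
Proof.
move=> uniform; rewrite -size_filter_nth.
apply: (card_uniform_classes (f := fun u => (lab u).2)).
- exact/filter_uniq/iota_uniq.
- move=> v vb; have := vb; rewrite inE => /andP[vS /eqP lv].
  have le_t : t <= nth 0 (sizes b) (lab v).2.
    rewrite -(uniform v vb) -lv; apply: leq_trans (card_label_le _ _).
    apply/subset_leq_card/subsetP => u.
    by rewrite !inE -surjective_pairing => /andP[].
  rewrite mem_filter mem_iota le_t /= add0n ltnNge; apply: contraTN le_t => ge.
  by rewrite nth_default // -ltnNge -(uniform v vb) card_label_class_gt0.
- move=> v vb; rewrite -(uniform v vb); apply: eq_card => u.
  move: vb; rewrite !inE => /andP[_ /eqP lv].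
  rewrite -andbA; case: (u \in S) => //=.
  rewrite [lab u]surjective_pairing [lab v]surjective_pairing xpair_eqE.
  by rewrite -lv andbC.
Qed.

End CliquesMultipartite.

Lemma cliques_multipartite_simple n (lab : 'I_n -> bool * nat) :
  simple_graph (cliques_multipartite lab).
Proof.
split=> [x|]; first by rewrite /cliques_multipartite eqxx.
exact: cliques_multipartite_sym.
Qed.

Fixpoint label_blocks (b : bool) (f : nat -> nat) L : seq (bool * nat) :=
  if L is L'.+1 then label_blocks b f L' ++ nseq (f L') (b, L') else [::].

Lemma count_label_blocks b f L c j :
  count_mem (c, j) (label_blocks b f L) = ((b == c) && (j < L)) * f j.
Proof.
elim: L => [|L IH] /=; first by rewrite andbF.
rewrite count_cat IH count_nseq /= xpair_eqE [L == j]eq_sym.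
rewrite ltnS [j <= L]leq_eqVlt.
by case: (j =P L) => [->|_]; rewrite ?ltnn ?andbF ?mul0n ?addn0 ?add0n ?orbF.
Qed.

Lemma size_label_blocks b f L :
  size (label_blocks b f L) = \sum_(0 <= k < L) f k.
Proof.
elim: L => [|L IH] /=; first by rewrite big_geq.
by rewrite size_cat IH size_nseq big_nat_recr.
Qed.

Definition block_labels (sizes : bool -> seq nat) : seq (bool * nat) :=
  label_blocks true (nth 0 (sizes true)) (size (sizes true)) ++
  label_blocks false (nth 0 (sizes false)) (size (sizes false)).

Lemma size_block_labels sizes :
  size (block_labels sizes) = sumn (sizes true) + sumn (sizes false).
Proof.
rewrite size_cat !size_label_blocks !sumnE.
by rewrite [X in _ = X + _](big_nth 0) [X in _ = _ + X](big_nth 0).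
Qed.

Lemma count_block_labels sizes b j :
  count_mem (b, j) (block_labels sizes) = nth 0 (sizes b) j.
Proof.
rewrite count_cat !count_label_blocks.
by case: b; rewrite /= ?mul0n ?add0n ?addn0; case: ltnP => ge;
  rewrite ?mul1n // mul0n nth_default.
Qed.

Lemma card_nth_eq_le (T : eqType) (x0 : T) (s : seq T) n x : n <= size s ->
  #|[set i : 'I_n | nth x0 s i == x]| <= count_mem x s.
Proof.
move=> le_ns; rewrite cardE size_filter -enumT.
have -> : count (mem [set i : 'I_n | nth x0 s i == x]) (enum 'I_n)
   = count (pred1 x) (map (nth x0 s) (map val (enum 'I_n))).
  by rewrite !count_map; apply: eq_count => i; rewrite /= inE.
rewrite val_enum_ord map_nth_iota0 //.
by rewrite -{2}(cat_take_drop n s) count_cat leq_addr.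
Qed.

Definition clique_sizes p := nseq p 3 ++ nseq (p - 2) 2 ++ nseq 2 1.

Definition part_sizes p :=
  nseq 3 (2 * p - 1) ++ nseq (p - 4) (p - 1) ++ nseq p 3 ++ nseq (2 * p) 1.

Definition extremal_sizes p (b : bool) :=
  if b then clique_sizes p else part_sizes p.

Lemma sumn_extremal_sizes p : 4 <= p ->
  sumn (clique_sizes p) + sumn (part_sizes p) = p ^ 2 + 11 * p - 1.
Proof. by move=> p4; rewrite !sumn_cat !sumn_nseq; nia. Qed.

Lemma count_clique_sizes p t : count (leq t) (clique_sizes p) =
  (t <= 3) * p + (t <= 2) * (p - 2) + (t <= 1) * 2.
Proof. by rewrite !count_cat !count_nseq addnA. Qed.

Lemma count_part_sizes p s : count (leq s) (part_sizes p) =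
  (s <= 2 * p - 1) * 3 + (s <= p - 1) * (p - 4) + (s <= 3) * p +
  (s <= 1) * (2 * p).
Proof. by rewrite !count_cat !count_nseq !addnA. Qed.

Lemma part_sizes_no_factor p s m : prime p -> 7 <= p ->
  m <= count (leq s) (part_sizes p) -> s * m != 4 * p.
Proof.
move=> p_pr p7; rewrite count_part_sizes => le_m; apply/eqP => spm.
have p_ndvd k : 0 < k < p -> ~~ (p %| k) by case/andP => k0 kp; rewrite gtnNdvd.
have three_ndvd : ~~ (3 %| 4 * p).
  by rewrite Euclid_dvdM // [3 %| p]dvdn_prime2 //; apply/eqP; lia.
have [le_s3|gt_s3] := leqP s 3.
  have [s3|ne_s3] := eqVneq s 3.
    by move: three_ndvd; rewrite -spm s3 dvdn_mulr.
  nia.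
have [le_sp|gt_sp] := leqP s (p - 1).
  have : p %| s * m by rewrite spm dvdn_mull.
  rewrite Euclid_dvdM //.
  by rewrite (negbTE (p_ndvd s _)) ?(negbTE (p_ndvd m _)); lia.
have [m3|ne_m3] := eqVneq m 3.
  by move: three_ndvd; rewrite -spm m3 dvdn_mull.
nia.
Qed.

Lemma no_side_split p d a b mA mB : prime p -> 7 <= p -> a + b = 4 * p ->
  a = d.+1 * mA -> mA <= count (leq d.+1) (clique_sizes p) ->
  b = (b - d) * mB -> mB <= count (leq (b - d)) (part_sizes p) ->
  (d = 0 \/ b <= d.*2) -> False.
Proof.
move=> p_pr p7 ab aA le_mA bB le_mB small.
have [mA0|mA_gt0] := posnP mA.
  have := part_sizes_no_factor p_pr p7 le_mB.
  by rewrite -bB; apply/negP/negPn/eqP; rewrite -ab aA mA0 muln0.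
rewrite count_clique_sizes in le_mA; rewrite count_part_sizes in le_mB.
case: small => [d0|le_b].
  subst d; rewrite subn0 in bB le_mB; have [b0|b_gt0] := posnP b; first lia.
  have mB1 : mB = 1 by apply/eqP; rewrite -(eqn_pmul2l b_gt0) muln1 -bB.
  lia.
have le_d2 : d <= 2 by case: (leqP d 2) le_mA mA_gt0 => //; lia.
nia.
Qed.

Theorem theorem9 (p : nat) : prime p -> 7 <= p ->
  N_eq_ge (4 * p) (p ^ 2 + 11 * p - 1).
Proof.
move=> p_pr p7 n _ forces; rewrite leqNgt; apply/negP => n_lt.
pose labels := block_labels (extremal_sizes p).
pose lab (i : 'I_n) := nth (true, 0) labels i.
have n_le : n <= size labels.
  by rewrite size_block_labels sumn_extremal_sizes //; lia.
have capacity b j :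
    #|[set u | lab u == (b, j)]| <= nth 0 (extremal_sizes p b) j.
  by rewrite -count_block_labels card_nth_eq_le.
have [S [cardS [d regular]]] := forces _ (cliques_multipartite_simple lab).
have [mA le_mA cardA] :=
  card_side_uniform capacity (card_label_class_clique regular).
pose b := #|side lab S false|.
have [mB le_mB cardB] :
    exists2 m, m <= count (leq (b - d)) (extremal_sizes p false)
             & b = (b - d) * m.
  apply: (card_side_uniform capacity) => v vP.
  by rewrite /b -(card_label_class_part regular vP) addnK.
apply: (no_side_split p_pr p7 _ cardA le_mA cardB le_mB).
- by rewrite card_sides cardS.
- by have [d0|/(card_part_side_le_double regular)] := posnP d; [left | right].
Qed.
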